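(* Let $\mathscr Q_n$ be a non-singular quadric in $\mathrm{PG}(n,2)$ of projective index $g\ge1$, let $0\le s<g$, let $\alpha_s$ be an $s$-dimensional subspace contained in $\mathscr Q_n$, and let $\Gamma_s$ be the graph constructed from $\alpha_s$ as described below. Then the maximum size of a clique in $\Gamma_s$ is $2^{g+1}-1$.
   Context: A non-singular quadric $\mathscr Q_n$ in $\mathrm{PG}(n,2)$ is the point set of a non-degenerate quadric; its projective index $g$ is the largest dimension of a projective subspace contained in $\mathscr Q_n$. The point-graph $\Gamma$ has vertex set the points of $\mathscr Q_n$, two distinct points adjacent iff the line joining them is contained in $\mathscr Q_n$. A point $X$ of $\mathscr Q_n$ has type (i) if $X\in\alpha_s$; type (ii) if $X\notin\alpha_s$ and $\langle\alpha_s,X\rangle\subseteq\mathscr Q_n$; type (iii) otherwise. Let $\mathcal X_s$ be the type (ii) points and $\mathcal Y_s$ the points of type (i) or (iii). The graph $\Gamma_s$ has the same vertex set as $\Gamma$ and the same edges, except that for each vertex $R\in\mathcal Y_s$ having exactly $\frac12|\mathcal X_s|$ neighbours in $\mathcal X_s$ (in $\Gamma$), those edges are deleted and $R$ is joined instead to the other $\frac12|\mathcal X_s|$ vertices of $\mathcal X_s$. *)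

From mathcomp Require Import all_boot all_order all_algebra.
Set Implicit Arguments. Unset Strict Implicit. Unset Printing Implicit Defensive.
Import GRing.Theory.
Local Open Scope ring_scope.

(* Quadratic form Q(v) = v A v^T on row vectors of 'F_2^(n+1); every
   quadratic form over F_2 (sum_{i<=j} a_ij x_i x_j) is of this shape. *)
Definition qf (n : nat) (A : 'M['F_2]_n.+1) (v : 'rV['F_2]_n.+1) : 'F_2 :=
  (v *m A *m v^T) 0 0.

Definition polar (n : nat) (A : 'M['F_2]_n.+1) (x y : 'rV['F_2]_n.+1) : 'F_2 :=
  qf A (x + y) - qf A x - qf A y.

Definition nonsingular (n : nat) (A : 'M['F_2]_n.+1) : bool :=
  [forall x : 'rV['F_2]_n.+1,
     ((x != 0) && [forall y : 'rV['F_2]_n.+1, polar A x y == 0]) ==> (qf A x != 0)].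

(* The projective subspace spanned by the rows of U is contained in the
   quadric (all its vectors are singular). A projective subspace of
   dimension d is a row space of rank d+1. *)
Definition tot_sing (n m : nat) (A : 'M['F_2]_n.+1) (U : 'M['F_2]_(m, n.+1)) : bool :=
  [forall v : 'rV['F_2]_n.+1, (v <= U)%MS ==> (qf A v == 0)].

Definition proj_index (n : nat) (A : 'M['F_2]_n.+1) (g : nat) : Prop :=
  (exists U : 'M['F_2]_n.+1, tot_sing A U /\ \rank U = g.+1) /\
  (forall U : 'M['F_2]_n.+1, tot_sing A U -> (\rank U <= g.+1)%N).

(* Points of the quadric (projective points of PG(n,2) = nonzero vectors). *)
Definition qpoints (n : nat) (A : 'M['F_2]_n.+1) : {set 'rV['F_2]_n.+1} :=
  [set v | (v != 0) && (qf A v == 0)].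

Definition gadj (n : nat) (A : 'M['F_2]_n.+1) (x y : 'rV['F_2]_n.+1) : bool :=
  (x != y) && tot_sing A (x + y)%MS.

Definition Xs (n : nat) (A S : 'M['F_2]_n.+1) : {set 'rV['F_2]_n.+1} :=
  [set x in qpoints A | ~~ (x <= S)%MS && tot_sing A (S + x)%MS].

Definition Ys (n : nat) (A S : 'M['F_2]_n.+1) : {set 'rV['F_2]_n.+1} :=
  qpoints A :\: Xs A S.

Definition switched (n : nat) (A S : 'M['F_2]_n.+1) (r : 'rV['F_2]_n.+1) : bool :=
  (r \in Ys A S) &&
  (2 * #|[set x in Xs A S | gadj A r x]| == #|Xs A S|)%N.

Definition gsadj (n : nat) (A S : 'M['F_2]_n.+1) (x y : 'rV['F_2]_n.+1) : bool :=
  if [&& x \in Ys A S, y \in Xs A S & switched A S x]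
     || [&& y \in Ys A S, x \in Xs A S & switched A S y]
  then ~~ gadj A x y else gadj A x y.

Definition is_clique_s (n : nat) (A S : 'M['F_2]_n.+1) (C : {set 'rV['F_2]_n.+1}) : bool :=
  (C \subset qpoints A) &&
  [forall x in C, forall y in C, (x != y) ==> gsadj A S x y].

(* The polar form B of Q is alternating, so a set of pairwise B-orthogonal
   points spans a totally singular subspace and has at most 2^(g+1) - 1
   elements.  The points of type (ii) are the points of alpha_s^perp outside
   alpha_s.  A point of alpha_s is adjacent to all of X_s, while a point R
   outside alpha_s^perp is switched: for a in alpha_s with B(R, a) = 1, the
   translation x |-> x + a exchanges its neighbours and non-neighbours in X_s.
   Lower bound: for a generator U, (U meet alpha_s^perp) + alpha_s is totally
   singular of dimension g + 1, and no edge inside alpha_s^perp is switched.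
   Upper bound: in a clique C of Gamma_s, B(x, y) = 1 exactly when one of x, y
   is switched and the other is of type (ii).  By linear duality, either some
   a in alpha_s has B(z, a) = 1 for every switched z in C, or some u in
   alpha_s^perp spanned by the switched points has B(u, x) = 1 for every x in
   C of type (ii).  Translating the type (ii) points of C by a, resp. the
   switched points by u, gives a pairwise orthogonal set of points of size |C|. *)

From mathcomp Require Import all_boot all_order all_algebra.
From mathcomp Require Import ring zify.
Set Implicit Arguments. Unset Strict Implicit. Unset Printing Implicit Defensive.
Import GRing.Theory.
Local Open Scope ring_scope.

Lemma pchar_F2 : (2 \in [pchar 'F_2])%N.
Proof. exact: pchar_Fp. Qed.

Lemma F2_neq0 (a : 'F_2) : a != 0 -> a = 1.
Proof. by case: a => [[|[|[]]] ?] // _; apply: val_inj. Qed.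

Lemma addvv_F2 (V : lmodType 'F_2) (v : V) : v + v = 0.
Proof. by rewrite -mulr2n -scaler_nat (pcharf0 pchar_F2) scale0r. Qed.

Lemma addrK_F2 (V : lmodType 'F_2) (v w : V) : v + w + w = v.
Proof. by rewrite -addrA addvv_F2 addr0. Qed.

Lemma card_rowspace (F : finFieldType) m n (W : 'M[F]_(m, n)) :
  #|[set v : 'rV[F]_n | (v <= W)%MS]| = (#|F| ^ \rank W)%N.
Proof.
have -> : [set v : 'rV_n | (v <= W)%MS] = [set y *m row_base W | y : 'rV_(\rank W)].
  apply/setP => v; rewrite inE; apply/idP/imsetP => [|[y _ ->]].
    by rewrite -(eq_row_base W) => /submxP [y ->]; exists y.
  by rewrite -(eq_row_base W) submxMl.
by rewrite card_imset ?cardsT ?card_mx ?mul1n //; exact/row_free_inj/row_base_free.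
Qed.

Lemma submx_alternative (F : fieldType) m n (M : 'M[F]_(m, n)) (v : 'rV[F]_n) :
  (v <= M)%MS \/ exists2 c : 'cV[F]_n, M *m c = 0 & v *m c != 0.
Proof.
have [|] := boolP (v <= M)%MS; first by left.
rewrite submxE => vM; right.
have /existsP [j vj] : [exists j, (v *m cokermx M) 0 j != 0].
  apply: contraR vM => /existsPn vM0.
  by apply/eqP/matrixP => i j; rewrite ord1 [RHS]mxE; exact/eqP/negPn.
exists (col j (cokermx M)); first by rewrite colE mulmxA mulmx_coker mul0mx.
apply: contra vj => /eqP/(congr1 (fun c : 'M_1 => c 0 0)); rewrite [RHS]mxE => <-.
by rewrite !mxE; apply/eqP/eq_bigr => k _; rewrite !mxE.
Qed.

Lemma card_translate (V : finZmodType) (C K : {set V}) t : K \subset C ->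
  {in K, forall x, x + t \notin C :\: K} ->
  #|(C :\: K) :|: [set x + t | x in K]| = #|C|.
Proof.
move=> KC Kt; rewrite cardsU; have -> : (C :\: K) :&: [set x + t | x in K] = set0.
  apply/setP => v; rewrite inE in_set0; apply/andP => -[vCK /imsetP [x xK vE]].
  by move: (Kt x xK); rewrite -vE vCK.
rewrite cards0 subn0.
by rewrite card_imset; [rewrite -(cardsID K C) (setIidPr KC) addnC | exact: addIr].
Qed.

Section QuadraticForm.
Variables (n : nat) (A : 'M['F_2]_n.+1).
Local Notation V := 'rV['F_2]_n.+1.
Implicit Types (x y z v w : V).

Definition polar_mx := A + A^T.

Lemma polarE x y : polar A x y = (x *m polar_mx *m y^T) 0 0.
Proof.
have entryD (M N : 'M['F_2]_1) : (M + N) 0 0 = M 0 0 + N 0 0 by rewrite mxE.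
have entry_tr (M : 'M['F_2]_1) : M 0 0 = M^T 0 0 by rewrite mxE.
rewrite /polar /qf /polar_mx linearD /= !mulmxDl !mulmxDr !entryD.
rewrite [(y *m A *m x^T) 0 0]entry_tr !trmx_mul trmxK mulmxA.
rewrite mulmxDl entryD.
by ring.
Qed.

Lemma polar_mxE m p (U : 'M_(m, n.+1)) (W : 'M_(p, n.+1)) i j :
  (U *m polar_mx *m W^T) i j = polar A (row i U) (row j W).
Proof.
have -> : (U *m polar_mx *m W^T) i j = (col j (row i (U *m polar_mx *m W^T))) 0 0.
  by rewrite !mxE.
by rewrite !row_mul colE -mulmxA -colE -tr_row polarE.
Qed.

Lemma polar_mx_tr : polar_mx^T = polar_mx.
Proof. by rewrite /polar_mx linearD /= trmxK addrC. Qed.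

Lemma polarC x y : polar A x y = polar A y x.
Proof. by rewrite /polar [y + x]addrC; ring. Qed.

Lemma polarDl x y z : polar A (x + y) z = polar A x z + polar A y z.
Proof. by rewrite !polarE !mulmxDl mxE. Qed.

Lemma polarDr x y z : polar A x (y + z) = polar A x y + polar A x z.
Proof. by rewrite polarC polarDl !(polarC x). Qed.

Lemma polarZl k x y : polar A (k *: x) y = k * polar A x y.
Proof. by rewrite !polarE -!scalemxAl mxE. Qed.

Lemma polarZr k x y : polar A x (k *: y) = k * polar A x y.
Proof. by rewrite polarC polarZl polarC. Qed.

Lemma qf0 : qf A 0 = 0.
Proof. by rewrite /qf !mul0mx mxE. Qed.

Lemma qfD x y : qf A (x + y) = qf A x + qf A y + polar A x y.
Proof. by rewrite /polar; ring. Qed.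

Lemma qfZ k x : qf A (k *: x) = k * k * qf A x.
Proof. by rewrite /qf linearZ /= -!scalemxAl -scalemxAr !mxE mulrA. Qed.

Lemma polarvv x : polar A x x = 0.
Proof.
have := qfD x x; rewrite addvv_F2 qf0 (addrr_pchar2 pchar_F2) add0r.
by move/esym.
Qed.

End QuadraticForm.

Section TotallySingular.
Variables (n : nat) (A : 'M['F_2]_n.+1).
Local Notation V := 'rV['F_2]_n.+1.
Implicit Types (x y v w : V) (D : {set V}).

Definition perp m (U : 'M_(m, n.+1)) := kermx (polar_mx A *m U^T).

Lemma perpP m (U : 'M_(m, n.+1)) x :
  reflect (forall v, (v <= U)%MS -> polar A x v = 0) (x <= perp U)%MS.
Proof.
apply: (iffP sub_kermxP) => [xU0 v /submxP [w ->] | xU0].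
  by rewrite polarE trmx_mul !mulmxA -(mulmxA x) xU0 mul0mx mxE.
apply/matrixP => i j; rewrite mulmxA polar_mxE row_id [RHS]mxE.
exact/xU0/row_sub.
Qed.

Lemma tot_singP m (U : 'M_(m, n.+1)) :
  reflect (forall v, (v <= U)%MS -> qf A v = 0) (tot_sing A U).
Proof.
apply: (iffP forallP) => [tsU v vU | tsU v]; first exact/eqP/(implyP (tsU v)).
by apply/implyP => /tsU ->.
Qed.

Lemma tot_singS m p (U : 'M_(m, n.+1)) (W : 'M_(p, n.+1)) :
  (W <= U)%MS -> tot_sing A U -> tot_sing A W.
Proof.
move=> WU /tot_singP tsU; apply/tot_singP => v vW; exact/tsU/(submx_trans vW).
Qed.

Lemma polar_tot_sing m (U : 'M_(m, n.+1)) v w :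
  tot_sing A U -> (v <= U)%MS -> (w <= U)%MS -> polar A v w = 0.
Proof.
move=> /tot_singP tsU vU wU.
by have := tsU _ (addmx_sub vU wU); rewrite qfD !tsU // !add0r.
Qed.

Lemma tot_sing_sub_perp m (U : 'M_(m, n.+1)) : tot_sing A U -> (U <= perp U)%MS.
Proof.
by move=> tsU; apply/row_subP => i; apply/perpP => v; apply/polar_tot_sing/row_sub.
Qed.

Lemma sub_perpC m p (U : 'M_(m, n.+1)) (W : 'M_(p, n.+1)) :
  (U <= perp W)%MS = (W <= perp U)%MS.
Proof.
suff sub_perp_tr m1 p1 (U1 : 'M_(m1, n.+1)) (W1 : 'M_(p1, n.+1)) :
    (U1 <= perp W1)%MS -> (W1 <= perp U1)%MS.
  by apply/idP/idP; apply: sub_perp_tr.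
move/sub_kermxP => UW; apply/sub_kermxP; apply: trmx_inj.
by rewrite !trmx_mul trmxK polar_mx_tr -mulmxA UW trmx0.
Qed.

Lemma tot_sing_rV x : tot_sing A x = (qf A x == 0).
Proof.
apply/tot_singP/eqP => [-> // | qx v /sub_rVP [k ->]].
by rewrite qfZ qx mulr0.
Qed.

Lemma tot_sing_adds m p (U : 'M_(m, n.+1)) (W : 'M_(p, n.+1)) :
  tot_sing A U -> tot_sing A W -> (U <= perp W)%MS -> tot_sing A (U + W)%MS.
Proof.
move=> /tot_singP tsU /tot_singP tsW UW.
apply/tot_singP => _ /sub_addsmxP [[u w] /= ->].
have /perpP uW := submx_trans (submxMl u U) UW.
by rewrite qfD tsU ?tsW ?uW ?submxMl ?addr0.
Qed.

Lemma tot_sing_add_rV x y : qf A x = 0 -> qf A y = 0 ->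
  tot_sing A (x + y)%MS = (polar A x y == 0).
Proof.
move=> qx qy; apply/idP/eqP => [tsxy | xy].
  exact: polar_tot_sing tsxy (addsmxSl _ _) (addsmxSr _ _).
apply: tot_sing_adds; rewrite ?tot_sing_rV ?qx ?qy //.
by apply/perpP => _ /sub_rVP [k ->]; rewrite polarZr xy mulr0.
Qed.

Lemma qpointsP x : reflect (x != 0 /\ qf A x = 0) (x \in qpoints A).
Proof. by rewrite inE; apply: (iffP andP) => [[-> /eqP] | [-> ->]]. Qed.

Lemma gadjE x y : x \in qpoints A -> y \in qpoints A ->
  gadj A x y = (x != y) && (polar A x y == 0).
Proof. by move=> /qpointsP [_ qx] /qpointsP [_ qy]; rewrite /gadj tot_sing_add_rV. Qed.

Lemma tot_sing_rows m (U : 'M_(m, n.+1)) :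
  (forall i, qf A (row i U) = 0) ->
  (forall i j, polar A (row i U) (row j U) = 0) -> tot_sing A U.
Proof.
move=> qU pU.
have UU : (U <= perp U)%MS.
  by apply/sub_kermxP/matrixP => i j; rewrite mulmxA polar_mxE pU mxE.
apply/tot_singP => _ /submxP [w ->].
suff /andP [_ /eqP //] : (w *m U <= U)%MS && (qf A (w *m U) == 0).
rewrite mulmx_sum_row.
apply: (big_ind (fun v => (v <= U)%MS && (qf A v == 0))).
- by rewrite sub0mx qf0.
- move=> v1 v2 /andP [v1U /eqP q1] /andP [v2U /eqP q2].
  move/perpP: (submx_trans v1U UU) => /(_ v2 v2U).
  by rewrite addmx_sub //= qfD q1 q2 => ->; rewrite !addr0.
- by move=> i _; rewrite scalemx_sub ?row_sub //= qfZ qU mulr0.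
Qed.

Definition setmx (D : {set V}) : 'M['F_2]_(#|D|, n.+1) :=
  \matrix_(i < #|D|) enum_val i.

Lemma row_setmx D i : row i (setmx D) \in D.
Proof. by rewrite rowK enum_valP. Qed.

Lemma setmx_row D x : x \in D -> exists i, x = row i (setmx D).
Proof. by move=> xD; exists (enum_rank_in xD x); rewrite rowK enum_rankK_in. Qed.

Lemma tot_sing_setmx D :
  {in D, forall x, qf A x = 0} -> {in D &, forall x y, polar A x y = 0} ->
  tot_sing A (setmx D).
Proof.
move=> qD pD; apply: tot_sing_rows => [i|i j]; [apply: qD | apply: pD];
  exact: row_setmx.
Qed.

Definition points m (W : 'M_(m, n.+1)) : {set V} := [set v | (v <= W)%MS] :\ 0.

Lemma card_points m (W : 'M_(m, n.+1)) : #|points W| = (2 ^ \rank W - 1)%N.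
Proof.
have := cardsD1 0 [set v : V | (v <= W)%MS].
by rewrite card_rowspace card_Fp // inE sub0mx add1n => ->; rewrite subn1.
Qed.

Lemma mxrank_tot_sing g m (W : 'M_(m, n.+1)) :
  proj_index A g -> tot_sing A W -> (\rank W <= g.+1)%N.
Proof.
move=> [_ maxU] tsW; rewrite -genmxE; apply: maxU.
by apply: tot_singS tsW; rewrite genmxE.
Qed.

Lemma card_ortho_points g (D : {set V}) : proj_index A g ->
  {subset D <= qpoints A} -> {in D &, forall x y, polar A x y = 0} ->
  (#|D| <= 2 ^ g.+1 - 1)%N.
Proof.
move=> Ag DQ pD.
have tsD : tot_sing A (setmx D).
  by apply: tot_sing_setmx pD => x /DQ /qpointsP [].
have /subset_leq_card DW : D \subset points (setmx D).
  apply/subsetP => x xD; have [x0 _] := qpointsP _ (DQ x xD).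
  by have [i xE] := setmx_row xD; rewrite !inE x0 xE row_sub.
apply: leq_trans DW _; rewrite card_points leq_sub2r // leq_pexp2l //.
exact: mxrank_tot_sing Ag tsD.
Qed.

Lemma polar0_setU (D1 D2 : {set V}) :
  {in D1 &, forall x y, polar A x y = 0} -> {in D2 &, forall x y, polar A x y = 0} ->
  {in D1 & D2, forall x y, polar A x y = 0} ->
  {in D1 :|: D2 &, forall x y, polar A x y = 0}.
Proof.
move=> p1 p2 p12 x y /setUP [x1 | x2] /setUP [y1 | y2];
  by [apply: p1 | apply: p12 | rewrite polarC; apply: p12 | apply: p2].
Qed.

Lemma mxrank_perp_adds m p (U : 'M_(m, n.+1)) (S : 'M_(p, n.+1)) :
  (U <= perp U)%MS -> (\rank U <= \rank ((U :&: perp S) + S))%N.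
Proof.
move=> UU.
(* U :&: perp S has codimension in U the rank of the pairing of U with S, and
   so has S :&: perp U in S; the latter contains U :&: perp S :&: S. *)
have rkU := mxrank_mul_ker U (polar_mx A *m S^T).
have rkS := mxrank_mul_ker S (polar_mx A *m U^T).
have rk_sum := mxrank_sum_cap (U :&: perp S)%MS S.
have rk_tr : \rank (U *m (polar_mx A *m S^T)) = \rank (S *m (polar_mx A *m U^T)).
  by rewrite -mxrank_tr !trmx_mul trmxK polar_mx_tr mulmxA.
have rk_cap : (\rank (U :&: perp S :&: S) <= \rank (S :&: perp U))%N.
  apply: mxrankS; rewrite sub_capmx capmxSr /=.
  exact: submx_trans (capmxSl _ _) (submx_trans (capmxSl _ _) UU).
rewrite /perp in rk_sum rk_cap *.
rewrite -rkU rk_tr -(leq_add2r (\rank (U :&: kermx (polar_mx A *m S^T) :&: S))).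
by rewrite rk_sum -rkS addnAC addnC !leq_add2l.
Qed.

Lemma polar_one_alternative p (S : 'M_(p, n.+1)) (Z X : {set V}) :
  {in Z & X, forall z x, polar A z x = 1} ->
  (exists2 a, (a <= S)%MS & {in Z, forall z, polar A z a = 1}) \/
  (exists2 u, (u <= setmx Z)%MS & (u <= perp S)%MS /\ {in X, forall x, polar A u x = 1}).
Proof.
(* Either z |-> 1 is of the form z |-> B(z, a) with a in S, or some sum u of an
   odd number of elements of Z is orthogonal to S, whence B(u, x) = 1 on X. *)
move=> ZX; pose G := setmx Z *m polar_mx A *m S^T.
pose ones : 'rV['F_2]_#|Z| := const_mx 1.
have [/submxP [y onesE] | [c Gc onesc]] := submx_alternative G^T ones.
  left; exists (y *m S); first exact: submxMl.
  move=> _ /setmx_row [i ->]; rewrite -[y *m S](row_id 0) -polar_mxE.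
  rewrite trmx_mul !mulmxA -/G -[G *m y^T]trmxK trmx_mul trmxK -onesE.
  by rewrite !mxE.
right; exists (c^T *m setmx Z); first exact: submxMl.
split.
  apply/sub_kermxP; rewrite !mulmxA -!(mulmxA c^T) -/G.
  by rewrite -[G]trmxK -trmx_mul Gc trmx0.
move=> x xX.
have ZE : setmx Z *m polar_mx A *m x^T = ones^T.
  apply/matrixP => i j; rewrite ord1 polar_mxE row_id !mxE.
  by apply: ZX xX; exact: row_setmx.
rewrite polarE -!(mulmxA c^T) ZE -trmx_mul mxE.
apply: F2_neq0; apply: contra onesc => /eqP onesc0.
by apply/eqP/matrixP => i j; rewrite !ord1 onesc0 mxE.
Qed.

End TotallySingular.

Section Switching.
Variables (n : nat) (A S : 'M['F_2]_n.+1).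
Hypothesis tsS : tot_sing A S.
Local Notation V := 'rV['F_2]_n.+1.
Implicit Types (x y r a : V).

Lemma XsE x :
  (x \in Xs A S) = [&& x \in qpoints A, ~~ (x <= S)%MS & (x <= perp A S)%MS].
Proof.
rewrite inE; have [/qpointsP [_ qx] /= | //] := boolP (x \in qpoints A).
congr andb; apply/idP/idP => [tsSx | xS].
  by apply/perpP => v vS; rewrite polarC; apply: polar_tot_sing tsSx _ (addsmxSr _ _);
    exact: submx_trans vS (addsmxSl _ _).
by apply: tot_sing_adds; rewrite ?tot_sing_rV ?qx // sub_perpC.
Qed.

Lemma Xs_qpoints x : x \in Xs A S -> x \in qpoints A.
Proof. by rewrite XsE => /andP []. Qed.

Lemma Xs_perp x : x \in Xs A S -> (x <= perp A S)%MS.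
Proof. by rewrite XsE => /and3P []. Qed.

Lemma Xs_addr x a : (a <= S)%MS -> x \in Xs A S -> x + a \in Xs A S.
Proof.
move=> aS; rewrite !XsE => /and3P [/qpointsP [_ qx] xS xP].
have xaS : ~~ ((x + a)%R <= S)%MS.
  by apply: contra xS => xaS; rewrite -(addrK_F2 x a) addmx_sub.
have aP := submx_trans aS (tot_sing_sub_perp tsS).
apply/and3P; split=> //; last exact: addmx_sub.
apply/qpointsP; split; first by apply: contraNneq xaS => ->; rewrite sub0mx.
move/perpP: xP => /(_ a aS) xa.
by rewrite qfD qx xa (tot_singP _ _ tsS a aS) !addr0.
Qed.

Lemma sub_perp_Ys r : r \in Ys A S -> (r <= perp A S)%MS -> (r <= S)%MS.
Proof.
by rewrite in_setD XsE => /andP [+ rQ] rP; rewrite rQ rP andbT negbK.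
Qed.

Lemma not_switched_sub r x0 : (r <= S)%MS -> x0 \in Xs A S -> ~~ switched A S r.
Proof.
move=> rS x0X; rewrite /switched negb_and orbC.
have -> : [set x in Xs A S | gadj A r x] = Xs A S.
  apply/setP => x; rewrite inE andb_idr // => /[dup] + xX.
  rewrite inE => /andP [_ /andP [xS tsSx]]; apply/andP; split.
    by apply: contraNneq xS => <-.
  by apply: tot_singS tsSx; rewrite addsmxS.
have : (0 < #|Xs A S|)%N by apply/card_gt0P; exists x0.
by move=> Xs_gt0; rewrite (_ : (2 * _ != _)%N) //; apply/eqP; lia.
Qed.

Lemma half_adjacent r : r \in qpoints A -> ~~ (r <= perp A S)%MS ->
  (2 * #|[set x in Xs A S | gadj A r x]| = #|Xs A S|)%N.
Proof.
move=> rQ rP.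
have /existsP [a /andP [aS /F2_neq0 ra]] : [exists a, (a <= S)%MS && (polar A r a != 0)].
  apply: contraR rP => /existsPn ra0; apply/perpP => v vS.
  by move: (ra0 v); rewrite vS negbK => /eqP.
set N := [set x in Xs A S | gadj A r x].
have inN u : u \in Xs A S -> (u \in N) = (polar A r u == 0).
  move=> uX; rewrite inE uX gadjE ?(Xs_qpoints uX) //=.
  suff -> : r != u by [].
  by apply: contraNneq rP => ->; exact: Xs_perp.
have NX : N \subset Xs A S by apply/subsetP => y; rewrite inE => /andP [].
have polar_ra u : polar A r (u + a) = polar A r u + 1 by rewrite polarDr ra.
have shiftN : [set x + a | x in N] = Xs A S :\: N.
  apply/setP => y; rewrite in_setD; apply/imsetP/andP => [[x xN ->] | [yN yX]].
    have xX := subsetP NX x xN; have xaX := Xs_addr aS xX.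
    split=> //; rewrite inN // polar_ra.
    by move: xN; rewrite inN // => /eqP ->; rewrite add0r oner_neq0.
  have yaX := Xs_addr aS yX.
  exists (y + a); last by rewrite addrK_F2.
  rewrite inN // polar_ra.
  by move: yN; rewrite inN // => /F2_neq0 ->; rewrite (addrr_pchar2 pchar_F2).
rewrite -(cardsID N (Xs A S)) (setIidPr NX) -shiftN card_imset; last exact: addIr.
by rewrite mul2n addnn.
Qed.

Lemma switchedE r x0 : x0 \in Xs A S -> r \in Ys A S ->
  switched A S r = ~~ (r <= perp A S)%MS.
Proof.
move=> x0X rY; have [rP | rP] /= := boolP (r <= perp A S)%MS.
  exact/negbTE/(not_switched_sub (sub_perp_Ys rY rP) x0X).
have rQ : r \in qpoints A by move: rY; rewrite in_setD => /andP [].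
by rewrite /switched rY half_adjacent // eqxx.
Qed.

Lemma gsadj_perp x y : (x <= perp A S)%MS -> (y <= perp A S)%MS ->
  gsadj A S x y = gadj A x y.
Proof.
have unflipped u w : (u <= perp A S)%MS ->
    [&& u \in Ys A S, w \in Xs A S & switched A S u] = false.
  move=> uP; apply/and3P => [[uY wX]]; by rewrite (switchedE wX uY) uP.
by move=> xP yP; rewrite /gsadj !unflipped.
Qed.

End Switching.

Section Lower.
Variables (n : nat) (A S : 'M['F_2]_n.+1).
Hypothesis tsS : tot_sing A S.

Lemma is_clique_s_points m (W : 'M_(m, n.+1)) :
  tot_sing A W -> (W <= perp A S)%MS -> is_clique_s A S (points W).
Proof.
move=> tsW WP; apply/andP; split.
  apply/subsetP => v; rewrite !inE => /andP [v0 vW].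
  by rewrite v0 (tot_singP _ _ tsW).
apply/forall_inP => x; rewrite !inE => /andP [_ xW].
apply/forall_inP => y; rewrite !inE => /andP [_ yW]; apply/implyP => xy.
rewrite gsadj_perp ?(submx_trans _ WP) // /gadj xy /=.
by apply: tot_singS tsW; rewrite addsmx_sub xW yW.
Qed.

Lemma exists_clique_s g : proj_index A g ->
  exists C, is_clique_s A S C /\ #|C| = (2 ^ g.+1 - 1)%N.
Proof.
move=> Ag; have [[U [tsU rkU]] _] := Ag.
set W := ((U :&: perp A S) + S)%MS.
have WP : (W <= perp A S)%MS by rewrite /W addsmx_sub capmxSr tot_sing_sub_perp.
have tsW : tot_sing A W.
  apply: tot_sing_adds => //; first exact: tot_singS (capmxSl _ _) tsU.
  exact: capmxSr.
have rkW : \rank W = g.+1.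
  apply/eqP; rewrite eqn_leq (mxrank_tot_sing Ag tsW) -rkU.
  exact: mxrank_perp_adds (tot_sing_sub_perp tsU).
by exists (points W); rewrite is_clique_s_points // card_points rkW.
Qed.

End Lower.

Section Upper.
Variables (n : nat) (A S : 'M['F_2]_n.+1) (g : nat).
Hypotheses (tsS : tot_sing A S) (Ag : proj_index A g).
Local Notation V := 'rV['F_2]_n.+1.
Implicit Types (x y z u v w : V).
Variable C : {set V}.
Hypothesis clqC : is_clique_s A S C.

Definition Zs := [set c in C | switched A S c].

Lemma clique_qpoints : {subset C <= qpoints A}.
Proof. by case/andP: clqC => /subsetP. Qed.

Lemma Zs_clique z : z \in Zs -> z \in C.
Proof. by rewrite inE => /andP []. Qed.

Lemma Zs_Ys z : z \in Zs -> z \in Ys A S.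
Proof. by rewrite inE => /andP [_ /andP []]. Qed.

Lemma Zs_Xs z : z \in Zs -> z \notin Xs A S.
Proof. by move/Zs_Ys; rewrite in_setD => /andP []. Qed.

Lemma polar_clique x y : x \in C -> y \in C ->
  polar A x y = ((x \in Zs) && (y \in Xs A S) || (y \in Zs) && (x \in Xs A S))%:R.
Proof.
move=> xC yC; have [<- | xy] := eqVneq x y.
  by rewrite polarvv orbb; case: (boolP (x \in Zs)) => // /Zs_Xs /negbTE ->.
have flipE u w : u \in C ->
    [&& u \in Ys A S, w \in Xs A S & switched A S u] = (u \in Zs) && (w \in Xs A S).
  move=> uC; rewrite [u \in Zs]inE uC /=.
  by case sw: (switched A S u); rewrite ?andbF ?andbT //; case/andP: sw => ->.
case/andP: clqC => _ /forall_inP /(_ x xC) /forall_inP /(_ y yC) /implyP /(_ xy).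
rewrite /gsadj !flipE // gadjE ?clique_qpoints // xy /=.
by case: ifP => _; [move/F2_neq0 | move/eqP].
Qed.

Section Mixed.
Variable x0 : V.
Hypothesis x0X : x0 \in Xs A S.

Lemma Zs_not_perp z : z \in Zs -> ~~ (z <= perp A S)%MS.
Proof.
move=> zZ; rewrite -(switchedE tsS x0X (Zs_Ys zZ)).
by move: zZ; rewrite inE => /andP [].
Qed.

Lemma clique_sub r : r \in C -> r \notin Zs -> r \notin Xs A S -> (r <= S)%MS.
Proof.
move=> rC rZ rX.
have rY : r \in Ys A S by rewrite in_setD rX clique_qpoints.
apply: (sub_perp_Ys tsS rY); apply/negPn; rewrite -(switchedE tsS x0X rY).
by apply: contra rZ => sw; rewrite inE rC sw.
Qed.

Lemma clique_perp r : r \in C -> r \notin Zs -> (r <= perp A S)%MS.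
Proof.
move=> rC rZ; have [/(Xs_perp tsS) // | rX] := boolP (r \in Xs A S).
exact: submx_trans (clique_sub rC rZ rX) (tot_sing_sub_perp tsS).
Qed.

Lemma Xs_Zs x : x \in Xs A S -> x \notin Zs.
Proof. by apply: contraL; exact: Zs_Xs. Qed.

Lemma card_clique_shift_Xs a : (a <= S)%MS -> {in Zs, forall z, polar A z a = 1} ->
  (#|C| <= 2 ^ g.+1 - 1)%N.
Proof.
move=> aS Za; set K := C :&: Xs A S.
have KCX x : x \in K -> x \in C /\ x \in Xs A S by rewrite inE => /andP.
have CK v : v \in C :\: K -> v \in C /\ v \notin Xs A S.
  by rewrite in_setD in_setI => /andP [vCX vC]; split=> //; move: vCX; rewrite vC.
rewrite -(card_translate (t := a) (subsetIl C (Xs A S))) => [|x /KCX [_ xX]]; last first.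
  by apply/negP => /CK [_]; rewrite (Xs_addr tsS).
apply: card_ortho_points Ag _ _.
  move=> v /setUP [/CK [vC _] | /imsetP [x /KCX [_ xX] ->]]; first exact: clique_qpoints.
  exact/(Xs_qpoints tsS)/(Xs_addr tsS).
apply: polar0_setU.
- move=> v w /CK [vC vX] /CK [wC wX].
  by rewrite polar_clique // (negbTE vX) (negbTE wX) !andbF.
- move=> v w /imsetP [x /KCX [xC xX] ->] /imsetP [y /KCX [yC yX] ->].
  have /perpP xa := Xs_perp tsS xX; have /perpP ya := Xs_perp tsS yX.
  rewrite !polarDl !polarDr polarvv (polarC _ a y) (xa a aS) (ya a aS).
  by rewrite polar_clique // (negbTE (Xs_Zs xX)) (negbTE (Xs_Zs yX)) /= !addr0.
- move=> v w /CK [vC vX] /imsetP [x /KCX [xC xX] ->]; rewrite polarDr.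
  have [vZ | vZ] := boolP (v \in Zs).
    by rewrite polar_clique // vZ xX Za // (addrr_pchar2 pchar_F2).
  rewrite polar_clique // (negbTE vZ) (negbTE vX) !andbF add0r.
  exact: polar_tot_sing tsS (clique_sub vC vZ vX) aS.
Qed.

Lemma card_clique_shift_Zs u : (u <= perp A S)%MS -> qf A u = 0 ->
  {in Zs, forall z, polar A z u = 0} -> {in C :&: Xs A S, forall x, polar A u x = 1} ->
  (#|C| <= 2 ^ g.+1 - 1)%N.
Proof.
move=> uP qu Zu Xu.
have CZ v : v \in C :\: Zs -> v \in C /\ v \notin Zs by rewrite in_setD => /andP [].
have zuP z : z \in Zs -> ~~ ((z + u)%R <= perp A S)%MS.
  move=> zZ; apply: contra (Zs_not_perp zZ) => zuP.
  by rewrite -(addrK_F2 z u) addmx_sub.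
have ZC : Zs \subset C by apply/subsetP => z /Zs_clique.
rewrite -(card_translate (t := u) ZC) => [|z zZ]; last first.
  by apply/negP => /CZ [vC vZ]; move: (zuP z zZ); rewrite clique_perp.
apply: card_ortho_points Ag _ _.
  move=> v /setUP [/CZ [vC _] | /imsetP [z zZ ->]]; first exact: clique_qpoints.
  apply/qpointsP; split; first by apply: contraNneq (zuP z zZ) => ->; exact: sub0mx.
  have /qpointsP [_ qz] := clique_qpoints (Zs_clique zZ).
  by rewrite qfD qz qu Zu // !addr0.
apply: polar0_setU.
- move=> v w /CZ [vC vZ] /CZ [wC wZ].
  by rewrite polar_clique // (negbTE vZ) (negbTE wZ).
- move=> v w /imsetP [z zZ ->] /imsetP [y yZ ->].
  rewrite !polarDl !polarDr polarvv (polarC _ u y) !Zu // polar_clique ?Zs_clique //.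
  by rewrite (negbTE (Zs_Xs zZ)) (negbTE (Zs_Xs yZ)) !andbF /= !addr0.
- move=> v w /CZ [vC vZ] /imsetP [z zZ ->].
  rewrite polarDr polarC (polarC _ v u) (polar_clique (Zs_clique zZ) vC).
  rewrite zZ (negbTE vZ) /=.
  have [vX | vX] := boolP (v \in Xs A S); rewrite /= ?add0r.
    by rewrite Xu ?in_setI ?vC // (addrr_pchar2 pchar_F2).
  by move/perpP: uP; apply; exact: clique_sub vC vZ vX.
Qed.

Lemma card_clique_mixed : (#|C| <= 2 ^ g.+1 - 1)%N.
Proof.
have ZX : {in Zs & C :&: Xs A S, forall z x, polar A z x = 1}.
  by move=> z x zZ /setIP [xC xX]; rewrite (polar_clique (Zs_clique zZ) xC) zZ xX.
have [[a aS Za] | [u uZ [uP Xu]]] := polar_one_alternative S ZX.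
  exact: card_clique_shift_Xs aS Za.
have tsZ : tot_sing A (setmx Zs).
  apply: tot_sing_setmx => [z /Zs_clique /clique_qpoints /qpointsP [] // | z y zZ yZ].
  by rewrite polar_clique ?Zs_clique // (negbTE (Zs_Xs zZ)) (negbTE (Zs_Xs yZ)) !andbF.
apply: card_clique_shift_Zs uP _ _ Xu; first exact: tot_singP tsZ u uZ.
move=> z /setmx_row [i ->]; rewrite polarC.
exact: polar_tot_sing tsZ uZ (row_sub i _).
Qed.

End Mixed.

Lemma card_clique_s_le : (#|C| <= 2 ^ g.+1 - 1)%N.
Proof.
have [CX0 | [x0 /setIP [_ x0X]]] := set_0Vmem (C :&: Xs A S); last first.
  exact: card_clique_mixed x0X.
have CX x : x \in C -> x \notin Xs A S.
  by move=> xC; apply/negP => xX; have := in_setI x C (Xs A S); rewrite CX0 in_set0 xC xX.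
apply: card_ortho_points Ag clique_qpoints _ => x y xC yC.
by rewrite polar_clique // (negbTE (CX x xC)) (negbTE (CX y yC)) !andbF.
Qed.

End Upper.

Theorem lemma5p5 (n g s : nat) (A S : 'M['F_2]_n.+1) :
  nonsingular A -> proj_index A g -> (1 <= g)%N -> (s < g)%N ->
  tot_sing A S -> \rank S = s.+1 ->
  (exists C : {set 'rV['F_2]_n.+1}, is_clique_s A S C /\ #|C| = (2 ^ g.+1 - 1)%N) /\
  (forall C : {set 'rV['F_2]_n.+1}, is_clique_s A S C -> (#|C| <= 2 ^ g.+1 - 1)%N).
Proof.
move=> _ Ag _ _ tsS _; split; first exact: (exists_clique_s tsS Ag).
exact: (card_clique_s_le tsS Ag).
Qed.
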